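(* Let $n\ge p\ge1$, $0<\varepsilon<1$, $\lambda>0$. Let $X\in\mathbb{R}^{n\times p}$ with $\|X^\top X-I_p\|\le\varepsilon$, let $A\in\mathbb{R}^{n\times n}$ be skew-symmetric, let $F(X,A)=AX+\lambda X(X^\top X-I_p)$, and for a step size $\eta>0$ set $\tilde X=X-\eta F(X,A)$. Let $g=\|F(X,A)\|$ and $d=\|X^\top X-I_p\|$. If $$\eta\le\eta(X):=\min\left\{\frac{\lambda d(1-d)+\sqrt{\lambda^2d^2(1-d)^2+g^2(\varepsilon-d)}}{g^2},\ \frac{1}{2\lambda}\right\},$$ (with the first term interpreted as $+\infty$ when $g=0$), then $\|\tilde X^\top\tilde X-I_p\|\le\varepsilon$.
   Context: $\|\cdot\|$ denotes the Frobenius norm. *)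

From mathcomp Require Import all_boot all_order all_algebra.
From mathcomp Require Import reals.
Set Implicit Arguments. Unset Strict Implicit. Unset Printing Implicit Defensive.
Import Order.TTheory GRing.Theory Num.Theory.
Local Open Scope ring_scope.

Definition fnorm (R : realType) (m n : nat) (M : 'M[R]_(m, n)) : R :=
  Num.sqrt (\sum_(i < m) \sum_(j < n) M i j ^+ 2).

Definition Fmap (R : realType) (n p : nat) (lam : R)
  (X : 'M[R]_(n, p)) (A : 'M[R]_n) : 'M[R]_(n, p) :=
  A *m X + lam *: (X *m (X^T *m X - 1%:M)).

From mathcomp Require Import all_boot all_order all_algebra.
From mathcomp Require Import reals.
From mathcomp Require Import ring lra.
Import Order.TTheory GRing.Theory Num.Theory.
Local Open Scope ring_scope.

(* Put S = X^T X - I and F = F(X, A).  Skew-symmetry of A cancels the A-terms in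
   X^T F + F^T X = 2 lam (S + S^2), hence
     Xt^T Xt - I = (1 - 2 eta lam) S - 2 eta lam S^2 + eta^2 F^T F.
   For eta <= 1/(2 lam) both coefficients of S and S^2 are nonnegative, so the
   triangle inequality and submultiplicativity of the Frobenius norm give
     ||Xt^T Xt - I|| <= d - 2 eta lam d (1 - d) + eta^2 g^2,
   which is at most eps as long as eta does not exceed the positive root of
   g^2 t^2 - 2 lam d (1 - d) t - (eps - d), i.e. the first term of eta(X). *)

Lemma CauchySchwarz_sum {R : realDomainType} {I : finType} (a b : I -> R) :
  (\sum_i a i * b i) ^+ 2 <= (\sum_i a i ^+ 2) * (\sum_i b i ^+ 2).
Proof.
set S1 := \sum_i \sum_j a i ^+ 2 * b j ^+ 2.
set S2 := \sum_i \sum_j (a i * b i) * (a j * b j).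
have S1C : \sum_j \sum_i a i ^+ 2 * b j ^+ 2 = S1 by rewrite exchange_big.
have Lagrange : \sum_i \sum_j (a i * b j - a j * b i) ^+ 2
    = S1 + \sum_i \sum_j a j ^+ 2 * b i ^+ 2 - 2 * S2.
  rewrite /S1 /S2 mulr_sumr -big_split -sumrB /=.
  apply: eq_bigr => i _; rewrite mulr_sumr -big_split -sumrB /=.
  by apply: eq_bigr => j _; ring.
have : 0 <= \sum_i \sum_j (a i * b j - a j * b i) ^+ 2.
  by apply: sumr_ge0 => i _; apply: sumr_ge0 => j _; exact: sqr_ge0.
rewrite Lagrange S1C expr2 !big_distrlr /= -/S1 -/S2; lra.
Qed.

Section Frobenius.
Local Set Implicit Arguments.
Context {R : realType}.

Definition fnorm2 m n (M : 'M[R]_(m, n)) := \sum_i \sum_j M i j ^+ 2.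

Lemma fnorm2_ge0 m n (M : 'M[R]_(m, n)) : 0 <= fnorm2 M.
Proof. by apply: sumr_ge0 => i _; apply: sumr_ge0 => j _; exact: sqr_ge0. Qed.

Lemma fnorm_ge0 m n (M : 'M[R]_(m, n)) : 0 <= fnorm M.
Proof. exact: sqrtr_ge0. Qed.

Lemma sqr_fnorm m n (M : 'M[R]_(m, n)) : fnorm M ^+ 2 = fnorm2 M.
Proof. exact/sqr_sqrtr/fnorm2_ge0. Qed.

Lemma fnormZ m n (a : R) (M : 'M[R]_(m, n)) : fnorm (a *: M) = `|a| * fnorm M.
Proof.
rewrite /fnorm -sqrtr_sqr -sqrtrM ?sqr_ge0 // mulr_sumr.
by congr Num.sqrt; apply: eq_bigr => i _; rewrite mulr_sumr;
  apply: eq_bigr => j _; rewrite mxE exprMn.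
Qed.

Lemma fnorm_tr m n (M : 'M[R]_(m, n)) : fnorm M^T = fnorm M.
Proof.
rewrite /fnorm exchange_big /=.
by congr Num.sqrt; apply: eq_bigr => i _; apply: eq_bigr => j _; rewrite mxE.
Qed.

Lemma ler_fnormD m n (M N : 'M[R]_(m, n)) : fnorm (M + N) <= fnorm M + fnorm N.
Proof.
rewrite -ler_sqr ?nnegrE ?addr_ge0 ?fnorm_ge0 // sqrrD !sqr_fnorm.
set c := \sum_i \sum_j M i j * N i j.
have -> : fnorm2 (M + N) = fnorm2 M + fnorm2 N + 2 * c.
  rewrite /fnorm2 /c mulr_sumr -!big_split /=; apply: eq_bigr => i _.
  rewrite mulr_sumr -!big_split /=; apply: eq_bigr => j _.
  by rewrite mxE; ring.
have : c ^+ 2 <= (fnorm M * fnorm N) ^+ 2.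
  have := CauchySchwarz_sum (fun ij : 'I_m * 'I_n => M ij.1 ij.2) (fun ij => N ij.1 ij.2).
  by rewrite exprMn !sqr_fnorm /c /fnorm2 !pair_bigA.
have := mulr_ge0 (fnorm_ge0 M) (fnorm_ge0 N).
nra.
Qed.

Lemma ler_fnormM m n k (M : 'M[R]_(m, n)) (N : 'M[R]_(n, k)) :
  fnorm (M *m N) <= fnorm M * fnorm N.
Proof.
rewrite -ler_sqr ?nnegrE ?mulr_ge0 ?fnorm_ge0 // exprMn !sqr_fnorm.
rewrite [fnorm2 N]/fnorm2 exchange_big /fnorm2 big_distrlr /=.
apply: ler_sum => i _; apply: ler_sum => j _; rewrite mxE.
exact: (CauchySchwarz_sum (fun l => M i l) (fun l => N l j)).
Qed.

Lemma ler_fnorm_update n (S G : 'M[R]_n) (a b c : R) :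
  0 <= a -> 0 <= b -> 0 <= c ->
  fnorm (a *: S - b *: (S *m S) + c *: G)
    <= a * fnorm S + b * fnorm S ^+ 2 + c * fnorm G.
Proof.
move=> a_ge0 b_ge0 c_ge0.
rewrite -scaleNr; apply: le_trans (ler_fnormD _ _) _.
apply: lerD; last by rewrite fnormZ ger0_norm.
apply: le_trans (ler_fnormD _ _) _.
rewrite !fnormZ normrN !ger0_norm // lerD2l ler_wpM2l // expr2.
exact: ler_fnormM.
Qed.

End Frobenius.

Section GramUpdate.
Local Set Implicit Arguments.
Variables (R : comPzRingType) (n p : nat) (X : 'M[R]_(n, p)).
Local Notation S := (X^T *m X - 1%:M).

Lemma gram_cross_skew (lam : R) (A : 'M[R]_n) : A^T = - A ->
  let F := A *m X + lam *: (X *m S) in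
  X^T *m F + F^T *m X = (2 * lam) *: (S + S *m S).
Proof.
move=> skewA F; have symS : S^T = S by rewrite linearB /= trmx1 trmx_mul trmxK.
have trF : F^T = - (X^T *m A) + lam *: (S *m X^T).
  by rewrite linearD linearZ /= !trmx_mul skewA symS mulmxN.
rewrite trF /F mulmxDr (mulmxDl (- _)) -scalemxAr -scalemxAl.
rewrite !(mulmxDl, mulmxDr, mulmxBl, mulmxBr, mulNmx, mulmxN, mulmx1, mul1mx, mulmxA).
move: (X^T *m A *m X) (X^T *m X *m X^T *m X) (X^T *m X) => B Q P.
by apply/matrixP => i j; rewrite !mxE; ring.
Qed.

Lemma gram_update (F : 'M[R]_(n, p)) (eta c : R) :
  X^T *m F + F^T *m X = c *: (S + S *m S) ->
  (X - eta *: F)^T *m (X - eta *: F) - 1%:M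
    = (1 - eta * c) *: S - (eta * c) *: (S *m S) + eta ^+ 2 *: (F^T *m F).
Proof.
move: (S *m S) => Q cross.
have FX : F^T *m X = c *: (S + Q) - X^T *m F by rewrite -cross addrC addKr.
rewrite [(X - _)^T]linearB /= [(eta *: F)^T]linearZ /= mulmxBl !mulmxBr.
rewrite -!scalemxAl -!scalemxAr FX.
move: (X^T *m F) (F^T *m F) (X^T *m X) => H G P.
by apply/matrixP => i j; rewrite !mxE; ring.
Qed.

End GramUpdate.

Lemma quadratic_le_upto_root {R : rcfType} (a b c t : R) :
  0 <= a -> 0 <= b -> 0 <= c -> 0 <= t ->
  (a != 0 -> t <= (b + Num.sqrt (b ^+ 2 + a * c)) / a) ->
  a * t ^+ 2 - 2 * b * t <= c.
Proof.
move=> a_ge0 b_ge0 c_ge0 t_ge0 t_le_root.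
have [->|a_neq0] := eqVneq a 0; first by nra.
have a_gt0 : 0 < a by rewrite lt0r a_neq0.
have disc_ge0 : 0 <= b ^+ 2 + a * c by rewrite addr_ge0 ?sqr_ge0 ?mulr_ge0.
set s := Num.sqrt _ in t_le_root.
have s_ge0 : 0 <= s := sqrtr_ge0 _.
have sqr_s : s ^+ 2 = b ^+ 2 + a * c := sqr_sqrtr disc_ge0.
have at_le : a * t - b <= s by move: (t_le_root a_neq0); rewrite ler_pdivlMr //; lra.
have b_le_s : b <= s by rewrite -ler_sqr ?nnegrE // sqr_s lerDl mulr_ge0.
have at_ge : - s <= a * t - b by have := mulr_ge0 a_ge0 t_ge0; lra.
(* [(a t - b)^2 - s^2 = a (a t^2 - 2 b t - c)] *)
have : (a * t - b) ^+ 2 <= s ^+ 2 by nra.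
rewrite sqr_s => h; rewrite -(ler_pM2l a_gt0); nra.
Qed.

Theorem lemma3 (R : realType) (n p : nat) (eps lam eta : R)
  (X : 'M[R]_(n, p)) (A : 'M[R]_n) :
  (1 <= p)%N -> (p <= n)%N ->
  0 < eps -> eps < 1 -> 0 < lam -> 0 < eta ->
  fnorm (X^T *m X - 1%:M) <= eps ->
  A^T = - A ->
  let g := fnorm (Fmap lam X A) in
  let d := fnorm (X^T *m X - 1%:M) in
  (g != 0 ->
     eta <= (lam * d * (1 - d)
             + Num.sqrt (lam ^+ 2 * d ^+ 2 * (1 - d) ^+ 2 + g ^+ 2 * (eps - d)))
            / g ^+ 2) ->
  eta <= 1 / (2 * lam) ->
  let Xt := X - eta *: Fmap lam X A in
  fnorm (Xt^T *m Xt - 1%:M) <= eps.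
Proof.
move=> _ _ _ eps_lt1 lam_gt0 eta_gt0 d_le_eps skewA g d eta_le_root eta_le_half /=.
have d_ge0 : 0 <= d := fnorm_ge0 _.
have lam_ge0 := ltW lam_gt0; have eta_ge0 := ltW eta_gt0.
have d_le1 : d <= 1 := le_trans d_le_eps (ltW eps_lt1).
have gram_le : fnorm ((Fmap lam X A)^T *m Fmap lam X A) <= g ^+ 2.
  by rewrite expr2 -[X in X * _]fnorm_tr ler_fnormM.
have quad : g ^+ 2 * eta ^+ 2 - 2 * (lam * d * (1 - d)) * eta <= eps - d.
  apply: quadratic_le_upto_root.
  - exact: sqr_ge0.
  - by rewrite !mulr_ge0 ?subr_ge0.
  - by rewrite subr_ge0.
  - exact: eta_ge0.
  - by rewrite sqrf_eq0 !exprMn.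
rewrite (gram_update eta (gram_cross_skew X lam skewA)).
have step_ge0 : 0 <= eta * (2 * lam) by rewrite !mulr_ge0.
have keep_ge0 : 0 <= 1 - eta * (2 * lam).
  by rewrite subr_ge0 -ler_pdivlMr ?mulr_gt0 // mul1r; rewrite mul1r in eta_le_half.
apply: le_trans (ler_fnorm_update _ _ _ _ _ keep_ge0 step_ge0 (sqr_ge0 eta)) _.
rewrite -/d; have := ler_wpM2l (sqr_ge0 eta) gram_le; nra.
Qed.
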